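(* Suppose $1/n\ll\varepsilon_3\ll\varepsilon_4\ll\eta_2\ll1$. Let $G$ be a digraph on $n$ vertices with $\delta^0(G)\geq n/2$ and let $A,B,S,T$ be a partition of $V(G)$ satisfying the $ST$-conditions, with sizes $a,b,s,t$. Then: (i) if $a=b\in\{0,1\}$, then for any choice of $(X_1,Y_1),(X_2,Y_2)\in\{(S,T),(T,S)\}$ there are two vertex-disjoint edges $e_1\in E(X_1,Y_1)$ and $e_2\in E(X_2,Y_2)$; (ii) if $A=\emptyset$, then there are two vertex-disjoint edges in $E(T,S)$; (iii) if $a=1$ and $b\geq 2$, then there are two vertex-disjoint edges in $E(T,S)$; (iv) there are two vertex-disjoint edges in $E(S,T\cup A)\cup E(T,S\cup B)$.
   Context: Digraphs have no loops and at most one edge in each direction between two vertices; $\delta^0$ is the minimum semidegree; $E(X,Y)$ is the set of edges $xy$ with $x\in X$, $y\in Y$; $d^+_X(x)=|N^+(x)\cap X|$, $d^-_X(x)=|N^-(x)\cap X|$, and $d^\pm_X(x)\geq c$ means both are $\geq c$; $G[X]$ is the induced subdigraph. The $ST$-conditions on a partition $A,B,S,T$ of sizes $a,b,s,t$: $a\leq b$, $s\leq t$; $\lfloor n/2\rfloor-\varepsilon_3n\leq s,t\leq\lceil n/2\rceil+\varepsilon_3 n$; $\delta^0(G[S]),\delta^0(G[T])\geq\eta_2 n$; $d^\pm_S(x)\geq n/2-\varepsilon_3n$ for all but at most $\varepsilon_3 n$ vertices $x\in S$; $d^\pm_T(x)\geq n/2-\varepsilon_3n$ for all but at most $\varepsilon_3n$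 vertices $x\in T$; $a+b\leq\varepsilon_3 n$; for all $x\in A$: $d^-_T(x),d^+_S(x)>n/2-3\eta_2n$ and $d^-_S(x),d^+_T(x)\leq 3\eta_2 n$; for all $x\in B$: $d^-_S(x),d^+_T(x)>n/2-3\eta_2 n$ and $d^-_T(x),d^+_S(x)\leq 3\eta_2 n$. The hierarchy $\alpha\ll\beta$ means $\alpha$ is sufficiently small as a function of $\beta$. *)

From HB Require Import structures.
From mathcomp Require Import all_boot all_order all_algebra.
Set Implicit Arguments. Unset Strict Implicit. Unset Printing Implicit Defensive.
Import Order.TTheory GRing.Theory Num.Theory.
Local Open Scope ring_scope.

(* A digraph: no loops; a relation automatically has at most one edge
   in each direction between two vertices. *)
Definition loopless (V : finType) (E : rel V) : Prop := forall x, ~~ E x x.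

Definition outdeg_in (V : finType) (E : rel V) (X : {set V}) (x : V) : nat :=
  #|[set y in X | E x y]|.
Definition indeg_in (V : finType) (E : rel V) (X : {set V}) (x : V) : nat :=
  #|[set y in X | E y x]|.

Definition min_semideg_ge (R : realFieldType) (V : finType) (E : rel V) (c : R) : Prop :=
  forall x : V, c <= (outdeg_in E setT x)%:R /\ c <= (indeg_in E setT x)%:R.

Definition partition4 (V : finType) (A B S T : {set V}) : Prop :=
  A :|: B :|: S :|: T = setT /\
  [&& [disjoint A & B], [disjoint A & S], [disjoint A & T],
      [disjoint B & S], [disjoint B & T] & [disjoint S & T]].

Definition ST_conditions (R : realFieldType) (V : finType) (E : rel V) (n : nat)
    (eps3 eta2 : R) (A B S T : {set V}) : Prop :=
  let nr : R := n%:R in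
  partition4 A B S T /\
  (#|A| <= #|B|)%N /\ (#|S| <= #|T|)%N /\
  ((n./2)%:R - eps3 * nr <= #|S|%:R /\ #|S|%:R <= (uphalf n)%:R + eps3 * nr) /\
  ((n./2)%:R - eps3 * nr <= #|T|%:R /\ #|T|%:R <= (uphalf n)%:R + eps3 * nr) /\
  (forall x, x \in S -> eta2 * nr <= (outdeg_in E S x)%:R /\
                        eta2 * nr <= (indeg_in E S x)%:R) /\
  (forall x, x \in T -> eta2 * nr <= (outdeg_in E T x)%:R /\
                        eta2 * nr <= (indeg_in E T x)%:R) /\
  #|[set x in S | ~~ ((nr / 2 - eps3 * nr <= (outdeg_in E S x)%:R) &&
                      (nr / 2 - eps3 * nr <= (indeg_in E S x)%:R))]|%:R <= eps3 * nr /\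
  #|[set x in T | ~~ ((nr / 2 - eps3 * nr <= (outdeg_in E T x)%:R) &&
                      (nr / 2 - eps3 * nr <= (indeg_in E T x)%:R))]|%:R <= eps3 * nr /\
  (#|A| + #|B|)%:R <= eps3 * nr /\
  (forall x, x \in A ->
     [/\ nr / 2 - 3 * eta2 * nr < (indeg_in E T x)%:R,
         nr / 2 - 3 * eta2 * nr < (outdeg_in E S x)%:R,
         (indeg_in E S x)%:R <= 3 * eta2 * nr &
         (outdeg_in E T x)%:R <= 3 * eta2 * nr]) /\
  (forall x, x \in B ->
     [/\ nr / 2 - 3 * eta2 * nr < (indeg_in E S x)%:R,
         nr / 2 - 3 * eta2 * nr < (outdeg_in E T x)%:R,
         (indeg_in E T x)%:R <= 3 * eta2 * nr &
         (outdeg_in E S x)%:R <= 3 * eta2 * nr]).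

Definition edge_in (V : finType) (E : rel V) (X Y : {set V}) (x y : V) : bool :=
  [&& E x y, x \in X & y \in Y].

Definition two_disjoint_edges (V : finType) (P1 P2 : V -> V -> bool) : Prop :=
  exists u1 v1 u2 v2 : V,
    [/\ P1 u1 v1, P2 u2 v2 & [disjoint [set u1; v1] & [set u2; v2]]].

From HB Require Import structures.
From mathcomp Require Import all_boot all_order all_algebra.
From mathcomp Require Import zify lra.
Import Order.TTheory GRing.Theory Num.Theory.
Set Implicit Arguments. Unset Strict Implicit. Unset Printing Implicit Defensive.

(* A vertex of S with no in-neighbour in T receives at least n/2 edges from
   A, B and S, hence more than |B|/2 from B; as every vertex of B sends fewer
   than |S|/2 - 1 edges into S, double counting leaves at least three vertices
   of S with an in-neighbour in T.  A similar count gives two vertices of T with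
   an out-neighbour in S, and two tails and two heads of a bipartite edge set
   always carry two disjoint edges: this is (ii) and (iii), and (i) follows by
   running the same argument in the converse digraph with A and B exchanged.
   For (iv), semidegree n/2 gives every vertex of S at least
   (|T :|: A| - |S :|: B|)/2 + 1 out-neighbours in T :|: A, and symmetrically
   for T, so either all vertices of one side send two edges across or all
   vertices of both sides send one. *)

Lemma leq_of_mul_succ m b c : m * b.+1 <= b * c -> m <= c.
Proof.
move=> h; rewrite -(leq_pmul2r (ltn0Sn b)); apply: leq_trans h _.
by rewrite mulnC leq_mul2l leqnSn orbT.
Qed.

Section Degrees.
Variables (V : finType) (E : rel V).
Implicit Types (X Y Z : {set V}) (x : V).

Definition converse : rel V := fun x y => E y x.

Lemma outdeg_in_le_card X x : outdeg_in E X x <= #|X|.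
Proof. by apply: subset_leq_card; apply/subsetP=> y; rewrite inE => /andP[]. Qed.

Lemma outdeg_in_lt_card X x : loopless E -> x \in X -> outdeg_in E X x < #|X|.
Proof.
move=> hE xX; rewrite (cardsD1 x X) xX ltnS; apply: subset_leq_card.
apply/subsetP=> y; rewrite !inE => /andP[yX Exy]; rewrite yX andbT.
by apply: contraTneq Exy => ->; apply: hE.
Qed.

Lemma outdeg_in_setU X Y x :
  outdeg_in E (X :|: Y) x <= outdeg_in E X x + outdeg_in E Y x.
Proof.
apply: leq_trans (leq_card_setU [set y in X | E x y] [set y in Y | E x y]).
by apply: subset_leq_card; apply/subsetP=> y; rewrite !inE andb_orl.
Qed.

Lemma card_set_in_sum X (p : pred V) : #|[set y in X | p y]| = \sum_(y in X) p y.
Proof.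
rewrite -sum1_card big_mkcond [RHS]big_mkcond; apply: eq_bigr => y _.
by rewrite inE; case: (y \in X); case: (p y).
Qed.

Lemma sum_indeg_in X Y : \sum_(x in X) indeg_in E Y x = \sum_(y in Y) outdeg_in E X y.
Proof.
under eq_bigr do rewrite /indeg_in card_set_in_sum.
by rewrite exchange_big; apply: eq_bigr => y _; rewrite /outdeg_in card_set_in_sum.
Qed.

Lemma double_count_le X Y Z k r c :
  Z \subset X -> (forall x, x \in Z -> r <= k * indeg_in E Y x) ->
  (forall y, y \in Y -> k * outdeg_in E X y <= c) -> #|Z| * r <= #|Y| * c.
Proof.
move=> sZX hZ hY; rewrite -sum_nat_const.
apply: (@leq_trans (k * \sum_(x in X) indeg_in E Y x)).
  rewrite big_distrr /= [RHS in _ <= RHS](big_setID Z) (setIidPr sZX) /=.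
  by apply: leq_trans (leq_addr _ _); apply: leq_sum.
by rewrite sum_indeg_in big_distrr /= -sum_nat_const; apply: leq_sum.
Qed.

End Degrees.

Section DisjointEdges.
Variables (V : finType) (E : rel V).
Implicit Types (P Q : {set V}) (x y : V).

Definition tails P Q := [set x in P | 0 < outdeg_in E Q x].
Definition heads P Q := [set y in Q | 0 < indeg_in E P y].

Lemma tailsP P Q x : x \in tails P Q -> exists y, edge_in E P Q x y.
Proof.
rewrite inE => /andP[xP /card_gt0P[y]]; rewrite inE => /andP[yQ Exy].
by exists y; apply/and3P.
Qed.

Lemma headsP P Q y : y \in heads P Q -> exists x, edge_in E P Q x y.
Proof.
rewrite inE => /andP[yQ /card_gt0P[x]]; rewrite inE => /andP[xP Exy].
by exists x; apply/and3P.
Qed.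

Lemma two_disjoint_edges_sym (p1 p2 : rel V) :
  two_disjoint_edges p1 p2 -> two_disjoint_edges p2 p1.
Proof.
case=> [u1 [v1 [u2 [v2 [h1 h2 dis]]]]].
by exists u2, v2, u1, v1; rewrite disjoint_sym.
Qed.

Lemma two_disjoint_edges_sub (p1 p2 q1 q2 : rel V) :
  subrel p1 q1 -> subrel p2 q2 ->
  two_disjoint_edges p1 p2 -> two_disjoint_edges q1 q2.
Proof.
move=> s1 s2 [u1 [v1 [u2 [v2 [h1 h2 dis]]]]].
by exists u1, v1, u2, v2; split; [apply: s1 | apply: s2 |].
Qed.

Lemma disjoint_set2 (u1 v1 u2 v2 : V) :
  u1 != u2 -> v1 != v2 -> u1 != v2 -> v1 != u2 ->
  [disjoint [set u1; v1] & [set u2; v2]].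
Proof.
move=> n1 n2 n3 n4; rewrite disjoints_subset; apply/subsetP=> z; rewrite !inE.
by case/orP=> /eqP->; rewrite negb_or ?n1 ?n2 ?n3 ?n4.
Qed.

Lemma neq_of_disjoint P Q x y : [disjoint P & Q] -> x \in P -> y \in Q -> x != y.
Proof. by move=> dPQ xP; apply: contraTneq => <-; rewrite (disjointFr dPQ xP). Qed.

Ltac distinct := solve [ done | by rewrite eq_sym |
  match goal with d : is_true [disjoint _ & _] |- _ =>
    solve [ exact: neq_of_disjoint d _ _ | rewrite eq_sym; exact: neq_of_disjoint d _ _ ]
  end ].

Lemma two_disjoint_edges_of_tails_heads P Q :
  [disjoint P & Q] -> 1 < #|tails P Q| -> 1 < #|heads P Q| ->
  two_disjoint_edges (edge_in E P Q) (edge_in E P Q).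
Proof.
move=> dPQ /card_gt1P[x1 [x2 [/tailsP[y1 e1] /tailsP[y2 e2] nx]]].
move=> /card_gt1P[z1 [z2 [/headsP[w1 f1] /headsP[w2 f2] nz]]].
case/and3P: (e1) => _ x1P y1Q; case/and3P: (e2) => _ x2P y2Q.
have [ey | ny] := eqVneq y1 y2; last first.
  by exists x1, y1, x2, y2; split=> //; apply: disjoint_set2; distinct.
subst y2.
have [w [z [f nzy]]] : exists w z, edge_in E P Q w z /\ z != y1.
  have [ez1 | nz1] := eqVneq z1 y1; last by exists w1, z1.
  by exists w2, z2; rewrite -ez1 eq_sym.
case/and3P: (f) => _ wP zQ.
have [ew | nw] := eqVneq w x1.
  by subst w; exists x1, z, x2, y1; split=> //; apply: disjoint_set2; distinct.
by exists w, z, x1, y1; split=> //; apply: disjoint_set2; distinct.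
Qed.

Lemma two_disjoint_edges_of_outdeg P Q :
  [disjoint P & Q] -> 1 < #|P| -> (forall x, x \in P -> 1 < outdeg_in E Q x) ->
  two_disjoint_edges (edge_in E P Q) (edge_in E P Q).
Proof.
move=> dPQ /card_gt1P[x1 [x2 [x1P x2P nx]]] hP.
have /card_gt1P[z1 [z2 [+ + nz]]] := hP x1 x1P.
have /ltnW/card_gt0P[y2] := hP x2 x2P.
rewrite !inE => /andP[y2Q Ey2] /andP[z1Q Ez1] /andP[z2Q Ez2].
have [y1 [y1Q Ey1 ny]] : exists y1, [/\ y1 \in Q, E x1 y1 & y1 != y2].
  have [ez1 | nz1] := eqVneq z1 y2; last by exists z1.
  by exists z2; rewrite -ez1 eq_sym.
exists x1, y1, x2, y2; split; try exact/and3P.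
by apply: disjoint_set2; distinct.
Qed.

Lemma two_disjoint_edges_of_tails P1 Q1 P2 Q2 :
  [disjoint P1 & Q1] -> [disjoint P2 & Q2] -> [disjoint P1 & P2] ->
  [disjoint Q1 & Q2] -> 1 < #|tails P1 Q1| -> 2 < #|tails P2 Q2| ->
  two_disjoint_edges (edge_in E P1 Q1) (edge_in E P2 Q2).
Proof.
move=> d11 d22 d12 dQ /card_gt1P[x1 [x2 [/tailsP[y1 e1] /tailsP[y2 e2] nx]]] t2.
case/and3P: (e1) => _ x1P y1Q; case/and3P: (e2) => _ x2P y2Q.
have /card_gt1P[w [w' [+ + nw]]] : 1 < #|tails P2 Q2 :\ y1|.
  by move: t2; rewrite (cardsD1 y1 (tails P2 Q2)); case: (_ \in _) => [|/ltnW].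
rewrite !in_setD1 => /andP[wy1 /tailsP[z f]] /andP[w'y1 /tailsP[z' f']].
case/and3P: (f) => _ wP zQ; case/and3P: (f') => _ w'P z'Q.
have [ez | nz] := eqVneq z x1; last first.
  by exists x1, y1, w, z; split=> //; apply: disjoint_set2; distinct.
have [ez' | nz'] := eqVneq z' x1; last first.
  by exists x1, y1, w', z'; split=> //; apply: disjoint_set2; distinct.
subst z z'; have [ey | ny] := eqVneq y2 w.
  by subst y2; exists x2, w, w', x1; split=> //; apply: disjoint_set2; distinct.
by exists x2, y2, w, x1; split=> //; apply: disjoint_set2; distinct.
Qed.

End DisjointEdges.

Section Partition.
Variable V : finType.
Implicit Types (A B S T : {set V}).

Lemma partition4_swap A B S T : partition4 A B S T -> partition4 B A S T.
Proof.
case=> cover /and5P[dAB dAS dAT dBS /andP[dBT dST]]; split.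
  by rewrite -(setUC A) cover.
by rewrite disjoint_sym dAB dAS dAT dBS dBT dST.
Qed.

Lemma card_partition4 A B S T :
  partition4 A B S T -> #|V| = #|A| + #|B| + #|S| + #|T|.
Proof.
case=> cover /and5P[dAB dAS dAT dBS /andP[dBT dST]].
rewrite -cardsT -cover !cardsU !setIUl (disjoint_setI0 dAB) (disjoint_setI0 dAS)
  (disjoint_setI0 dAT) (disjoint_setI0 dBS) (disjoint_setI0 dBT) (disjoint_setI0 dST).
by rewrite !setU0 !cards0 !subn0.
Qed.

Lemma partition4_cross A B S T : partition4 A B S T ->
  (S :|: B) :|: (T :|: A) = setT /\ [disjoint S :|: B & T :|: A].
Proof.
case=> cover /and5P[dAB dAS dAT dBS /andP[dBT dST]]; split.
  by rewrite -cover; apply/setP=> x; rewrite !inE; do !case: (_ \in _).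
rewrite -setI_eq0 setIUl !setIUr (setIC S A) (setIC B A) (disjoint_setI0 dST).
by rewrite (disjoint_setI0 dAS) (disjoint_setI0 dBT) (disjoint_setI0 dAB) !setU0.
Qed.

End Partition.

Definition half_min_semideg (V : finType) (E : rel V) : Prop :=
  forall x, #|V| <= 2 * outdeg_in E setT x /\ #|V| <= 2 * indeg_in E setT x.

Lemma half_min_semideg_converse (V : finType) (E : rel V) :
  half_min_semideg E -> half_min_semideg (converse E).
Proof. by move=> h x; have [] := h x. Qed.

Section HalfMinSemideg.
Variables (V : finType) (E : rel V).
Implicit Types (A B S T X Y P Q : {set V}) (x : V).
Hypotheses (hE : loopless E) (hdeg : half_min_semideg E).

Lemma card_le_outdeg_partition4 A B S T x : partition4 A B S T ->
  #|V| <= 2 * (outdeg_in E A x + outdeg_in E B x + outdeg_in E S x + outdeg_in E T x).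
Proof.
case=> cover _; have [+ _] := hdeg x; rewrite -cover.
have := outdeg_in_setU E (A :|: B :|: S) T x.
have := outdeg_in_setU E (A :|: B) S x; have := outdeg_in_setU E A B x; lia.
Qed.

Lemma outdeg_in_compl_lower X Y x : X :|: Y = setT -> [disjoint X & Y] ->
  x \in X -> #|Y| + 2 <= #|X| + 2 * outdeg_in E Y x.
Proof.
move=> cover dXY xX; have [hx _] := hdeg x.
have cardV : #|V| = #|X| + #|Y|.
  by rewrite -cardsT -cover cardsU disjoint_setI0 // cards0 subn0.
have := outdeg_in_lt_card hE xX; have := outdeg_in_setU E X Y x.
by rewrite cover; lia.
Qed.

Lemma two_disjoint_crossing_edges X Y P Q :
  X :|: Y = setT -> [disjoint X & Y] -> P \subset X -> Q \subset Y ->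
  2 < #|P| -> 2 < #|Q| ->
  two_disjoint_edges (fun x y => edge_in E P Y x y || edge_in E Q X x y)
                     (fun x y => edge_in E P Y x y || edge_in E Q X x y).
Proof.
move=> cover dXY sPX sQY P3 Q3.
set cross := fun x y => _ || _.
have dPY : [disjoint P & Y] := disjointWl sPX dXY.
have dQX : [disjoint Q & X] by rewrite disjoint_sym in dXY; exact: disjointWl sQY dXY.
have dPQ : [disjoint P & Q] := disjointW sPX sQY dXY.
have dYX : [disjoint Y & X] by rewrite disjoint_sym.
have crossl : subrel (edge_in E P Y) cross by move=> x y; rewrite /cross => ->.
have crossr : subrel (edge_in E Q X) cross by move=> x y; rewrite /cross orbC => ->.
have degP x : x \in P -> #|Y| + 2 <= #|X| + 2 * outdeg_in E Y x.
  by move/(subsetP sPX); apply: outdeg_in_compl_lower.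
have degQ x : x \in Q -> #|X| + 2 <= #|Y| + 2 * outdeg_in E X x.
  by move/(subsetP sQY); apply: outdeg_in_compl_lower; rewrite // setUC.
case: (ltngtP #|X| #|Y|) => cardXY.
- apply: (two_disjoint_edges_sub crossl crossl).
  apply: two_disjoint_edges_of_outdeg => [//||x /degP]; lia.
- apply: (two_disjoint_edges_sub crossr crossr).
  apply: two_disjoint_edges_of_outdeg => [//||x /degQ]; lia.
- apply: (two_disjoint_edges_sub crossl crossr).
  apply: two_disjoint_edges_of_tails => //.
    apply: leq_trans (ltnW P3) (subset_leq_card _).
    by apply/subsetP=> x xP; rewrite inE xP /=; move/degP: xP; lia.
  apply: leq_trans Q3 (subset_leq_card _).
  by apply/subsetP=> x xQ; rewrite inE xQ /=; move/degQ: xQ; lia.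
Qed.

End HalfMinSemideg.

(* In the ST-conditions this holds for B in E and for A in converse E, because
   3 eta2 n < |S|/2 - 1. *)
Definition few_back_edges (V : finType) (E : rel V) (Z S T : {set V}) : Prop :=
  forall z, z \in Z -> 2 * outdeg_in E S z + 3 <= #|S| /\ 2 * indeg_in E T z + 3 <= #|S|.

Section FewBackEdges.
Variables (V : finType) (E : rel V) (A B S T : {set V}).
Hypotheses (hE : loopless E) (hdeg : half_min_semideg E)
  (hpart : partition4 A B S T) (hA1 : #|A| <= 1) (hAB : #|A| <= #|B|)
  (hST : #|S| <= #|T|) (hS3 : 2 < #|S|)
  (hB : few_back_edges E B S T).

Let outdeg_split x :
  #|V| <= 2 * (outdeg_in E A x + outdeg_in E B x + outdeg_in E S x + outdeg_in E T x).
Proof. exact (card_le_outdeg_partition4 hdeg x hpart). Qed.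

Let indeg_split y :
  #|V| <= 2 * (indeg_in E A y + indeg_in E B y + indeg_in E S y + indeg_in E T y).
Proof. exact (card_le_outdeg_partition4 (half_min_semideg_converse hdeg) y hpart). Qed.

Lemma card_heads_TS : 2 < #|heads E T S|.
Proof.
have hY y : y \in S :\: heads E T S -> #|B|.+1 <= 2 * indeg_in E B y.
  rewrite !inE => /andP[+ yS]; rewrite yS /= -leqNgt leqn0 => /eqP noT.
  have : indeg_in E S y < #|S| := outdeg_in_lt_card (E := converse E) hE yS.
  have : indeg_in E A y <= #|A| := outdeg_in_le_card (converse E) A y.
  by have := card_partition4 hpart; have := indeg_split y; rewrite noT; lia.
have /leq_of_mul_succ : #|S :\: heads E T S| * #|B|.+1 <= #|B| * (#|S| - 3).
  by apply: double_count_le (subsetDl _ _) hY _ => z /hB[]; lia.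
have := cardsID (heads E T S) S; have := subset_leq_card (subsetIr S (heads E T S)).
lia.
Qed.

Lemma card_tails_TS : 1 < #|tails E T S|.
Proof.
have [ltST | leTS] := ltnP #|S| #|T|; last first.
  have hY x : x \in T :\: tails E T S -> #|B|.+1 <= 2 * outdeg_in E B x.
    rewrite !inE => /andP[+ xT]; rewrite xT /= -leqNgt leqn0 => /eqP noS.
    have := outdeg_in_lt_card hE xT; have := outdeg_in_le_card E A x.
    by have := card_partition4 hpart; have := outdeg_split x; rewrite noS; lia.
  have /leq_of_mul_succ : #|T :\: tails E T S| * #|B|.+1 <= #|B| * (#|S| - 3).
    have hBT' z : z \in B -> 2 * indeg_in E T z <= #|S| - 3 by move/hB=> []; lia.
    exact (double_count_le (subsetDl T (tails E T S)) hY hBT').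
  have := cardsID (tails E T S) T; have := subset_leq_card (subsetIr T (tails E T S)).
  lia.
(* Otherwise every vertex of S gets at least (|B| + 1 - |A|)/2 edges from B. *)
rewrite ltnNge; apply/negP => few.
have fewT y : y \in S -> indeg_in E T y <= 1.
  move=> yS; apply: leq_trans few; apply: subset_leq_card; apply/subsetP => x.
  rewrite !inE => /andP[xT Exy]; rewrite xT /=; apply/card_gt0P; exists y.
  by rewrite inE yS.
have hS y : y \in S -> #|B| + 1 - #|A| <= 2 * indeg_in E B y.
  move=> yS; have : indeg_in E S y < #|S| := outdeg_in_lt_card (E := converse E) hE yS.
  have : indeg_in E A y <= #|A| := outdeg_in_le_card (converse E) A y.
  have := card_partition4 hpart; have := indeg_split y; have := fewT y yS; lia.
have : #|S| * (#|B| + 1 - #|A|) <= #|B| * (#|S| - 3).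
  by apply: double_count_le (subxx S) hS _ => z /hB[]; lia.
nia.
Qed.

Lemma two_disjoint_edges_TS : two_disjoint_edges (edge_in E T S) (edge_in E T S).
Proof.
have dTS : [disjoint T & S].
  by case: hpart => _ /and5P[_ _ _ _ /andP[_]]; rewrite disjoint_sym.
exact: two_disjoint_edges_of_tails_heads dTS card_tails_TS (ltnW card_heads_TS).
Qed.

End FewBackEdges.

Lemma two_disjoint_edges_ST_TS (V : finType) (E : rel V) (A B S T : {set V}) :
  loopless E -> half_min_semideg E -> partition4 A B S T ->
  #|A| = #|B| -> #|A| <= 1 -> #|S| <= #|T| -> 2 < #|S| ->
  few_back_edges E B S T -> few_back_edges (converse E) A S T ->
  forall X1 Y1 X2 Y2 : {set V},
    (X1, Y1) \in [:: (S, T); (T, S)] -> (X2, Y2) \in [:: (S, T); (T, S)] ->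
    two_disjoint_edges (edge_in E X1 Y1) (edge_in E X2 Y2).
Proof.
move=> hE hdeg hpart hAB hA1 hST hS3 hB hA.
have hpart' := partition4_swap hpart; have hdeg' := half_min_semideg_converse hdeg.
have hB1 : #|B| <= 1 by rewrite -hAB.
have tailsTS := card_tails_TS hE hdeg hpart hA1 (eq_leq hAB) hST hS3 hB.
have headsTS := card_heads_TS hE hdeg hpart hA1 (eq_leq hAB) hST hS3 hB.
(* heads and tails swap roles in the converse digraph *)
have tailsST : 2 < #|tails E S T|
  := card_heads_TS (E := converse E) hE hdeg' hpart' hB1 (eq_leq (esym hAB)) hST hS3 hA.
have headsST : 1 < #|heads E S T|
  := card_tails_TS (E := converse E) hE hdeg' hpart' hB1 (eq_leq (esym hAB)) hST hS3 hA.
have dST : [disjoint S & T] by case: hpart => _ /and5P[_ _ _ _ /andP[_]].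
have dTS : [disjoint T & S] by rewrite disjoint_sym.
move=> X1 Y1 X2 Y2; rewrite !inE => /orP[]/eqP[-> ->] /orP[]/eqP[-> ->].
- exact: two_disjoint_edges_of_tails_heads dST (ltnW tailsST) headsST.
- by apply: two_disjoint_edges_sym; apply: two_disjoint_edges_of_tails.
- exact: two_disjoint_edges_of_tails.
- exact: two_disjoint_edges_of_tails_heads dTS tailsTS (ltnW headsTS).
Qed.

Section RealBounds.
Variable R : realFieldType.
Local Open Scope ring_scope.

Lemma half_min_semideg_of_real (V : finType) (E : rel V) :
  min_semideg_ge E (#|V|%:R / 2 : R) -> half_min_semideg E.
Proof. by move=> h x; have [ho hi] := h x; rewrite -!(ler_nat R) !natrM; split; lra. Qed.

Lemma ST_margin (eta2 eps3 : R) (n s : nat) :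
  0 < eta2 -> eta2 <= 1 / 100 -> 0 < eps3 -> eps3 <= 1 / 100 -> (100 <= n)%N ->
  (n./2)%:R - eps3 * n%:R <= s%:R -> 2 * (3 * eta2 * n%:R) + 2 < s%:R.
Proof.
move=> eta2_gt0 eta2_le eps3_gt0 eps3_le n_ge hs.
have : (n <= 2 * n./2 + 1)%N.
  by rewrite -{1}(odd_double_half n) -mul2n addnC leq_add2l leq_b1.
rewrite -(ler_nat R) natrD natrM.
have : 100 <= n%:R :> R by rewrite (ler_nat R 100 n).
have : 0 <= (1 / 100 - eps3) * n%:R by apply: mulr_ge0 => //; lra.
have : 0 <= (1 / 100 - eta2) * n%:R by apply: mulr_ge0 => //; lra.
lra.
Qed.

Lemma leq_of_real_margin (K : R) (d s : nat) :
  d%:R <= K -> 2 * K + 2 < s%:R -> (2 * d + 3 <= s)%N.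
Proof.
move=> hd hs; have : (2 * d + 2)%:R < s%:R :> R by rewrite natrD natrM; lra.
by rewrite ltr_nat; lia.
Qed.

End RealBounds.

Local Open Scope ring_scope.

Theorem proposition5p3 (R : realFieldType) :
  exists eta0 : R, 0 < eta0 /\
  forall eta2 : R, 0 < eta2 -> eta2 <= eta0 ->
  exists eps4_0 : R, 0 < eps4_0 /\
  forall eps4 : R, 0 < eps4 -> eps4 <= eps4_0 ->
  exists eps3_0 : R, 0 < eps3_0 /\
  forall eps3 : R, 0 < eps3 -> eps3 <= eps3_0 ->
  exists n0 : nat, forall n : nat, (n0 <= n)%N ->
  forall (V : finType) (E : rel V) (A B S T : {set V}),
    #|V| = n -> loopless E ->
    min_semideg_ge E (n%:R / 2 : R) ->
    ST_conditions E n eps3 eta2 A B S T ->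
    [/\ (* (i) *)
        ((#|A| = #|B|) -> (#|A| <= 1)%N ->
          forall X1 Y1 X2 Y2 : {set V},
            (X1, Y1) \in [:: (S, T); (T, S)] ->
            (X2, Y2) \in [:: (S, T); (T, S)] ->
            two_disjoint_edges (edge_in E X1 Y1) (edge_in E X2 Y2)),
        (* (ii) *)
        (A = set0 -> two_disjoint_edges (edge_in E T S) (edge_in E T S)),
        (* (iii) *)
        (#|A| = 1%N -> (2 <= #|B|)%N ->
          two_disjoint_edges (edge_in E T S) (edge_in E T S)) &
        (* (iv) *)
        two_disjoint_edges
          (fun x y => edge_in E S (T :|: A) x y || edge_in E T (S :|: B) x y)
          (fun x y => edge_in E S (T :|: A) x y || edge_in E T (S :|: B) x y)].
Proof.
exists (1 / 100); split; first lra.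
move=> eta2 eta2_gt0 eta2_le; exists 1; split; first lra.
move=> eps4 _ _; exists (1 / 100); split; first lra.
move=> eps3 eps3_gt0 eps3_le; exists 100%N => n n_ge V E A B S T cardV hE hmin.
case=> hpart [hAB [hST [[hS _] [_ [_ [_ [_ [_ [_ [hA hB]]]]]]]]]].
subst n; have hdeg := half_min_semideg_of_real hmin.
have margin := ST_margin eta2_gt0 eta2_le eps3_gt0 eps3_le n_ge hS.
have few d : d%:R <= 3 * eta2 * #|V|%:R -> (2 * d + 3 <= #|S|)%N.
  by move/leq_of_real_margin; apply.
have hS3 : (2 < #|S|)%N.
  by have : (2 * 0 + 3 <= #|S|)%N by apply: few; rewrite !mulr_ge0 //; lra.
have fewB : few_back_edges E B S T by move=> z /hB[_ _ hT hS']; split; apply: few.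
have fewA : few_back_edges (converse E) A S T.
  by move=> z /hA[_ _ hS' hT]; split; apply: few.
have [coverX dX] := partition4_cross hpart.
split.
- move=> eqAB leA1.
  exact: two_disjoint_edges_ST_TS hE hdeg hpart eqAB leA1 hST hS3 fewB fewA.
- move=> A0; have hA1 : (#|A| <= 1)%N by rewrite A0 cards0.
  exact: two_disjoint_edges_TS hE hdeg hpart hA1 hAB hST hS3 fewB.
- move=> A1 _; have hA1 : (#|A| <= 1)%N by rewrite A1.
  exact: two_disjoint_edges_TS hE hdeg hpart hA1 hAB hST hS3 fewB.
- exact (two_disjoint_crossing_edges hE hdeg coverX dX (subsetUl _ _) (subsetUl _ _)
    hS3 (leq_trans hS3 hST)).
Qed.
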